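(* Let $M/K$ be obtained by strong cluster magnification from a subextension $L/K$ with magnification factor $d$. Then $t_K(M)=d\,t_K(L)$ and $u_K(M)=u_K(L)$.
   Context: $K$ is a perfect field with a fixed algebraic closure $\bar K$; all extensions finite inside $\bar K$; $\tilde L$ is the Galois closure of $L/K$. Strong cluster magnification: $M/K$ is obtained by strong cluster magnification from $L/K$ ($K\subseteq L\subseteq M$) if $[L:K]>2$ and there is a finite Galois $F/K$ with $\tilde L$ and $F$ linearly disjoint over $K$ and $LF=M$; $d=[F:K]$ is the magnification factor. For a finite extension $P/K$, let $F_P$ be the unique subfield of $P$ Galois over $K$ of maximum possible degree; the ascending index is $t_K(P)=[F_P:K]$ and $u_K(P)=[P:F_P]$. *)

(* field extensions as subfields of an ambient splitting field. *)
From HB Require Import structures.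
From mathcomp Require Import all_boot all_order all_algebra all_field.
Set Implicit Arguments. Unset Strict Implicit. Unset Printing Implicit Defensive.
Import GRing.Theory.
Local Open Scope ring_scope.

Section Defs.
Variables (F0 : fieldType) (Om : splittingFieldType F0).
Implicit Types K L M E P F Lt FP A B : {subfield Om}.

(* K is a perfect field: char 0, or char p > 0 with Frobenius surjective on K *)
Definition perfect_subfield K : Prop :=
  forall p : nat, p \in [pchar Om] ->
    forall x, x \in K -> exists2 y, y \in K & y ^+ p = x.

Definition is_galois_closure K L Lt : Prop :=
  [/\ (L <= Lt)%VS, galois K Lt &
      forall E, (L <= E)%VS -> galois K E -> (Lt <= E)%VS].

Definition linearly_disjoint K (A B : {subfield Om}) : Prop :=
  [/\ (K <= A)%VS, (K <= B)%VS &
      \dim_K (A * B)%AS = (\dim_K A * \dim_K B)%N].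

(* M/K is obtained from L/K by strong cluster magnification via the finite
   Galois extension F/K (magnification factor [F:K]). *)
Definition strong_cluster_magnification K L M F : Prop :=
  [/\ (K <= L)%VS /\ (L <= M)%VS, (2 < \dim_K L)%N, galois K F,
      (forall Lt, is_galois_closure K L Lt -> linearly_disjoint K Lt F) &
      (L * F)%AS = M].

Definition is_max_galois_sub K P FP : Prop :=
  [/\ (FP <= P)%VS, galois K FP &
      forall E, (E <= P)%VS -> galois K E -> (\dim_K E <= \dim_K FP)%N].

Definition t_index K FP : nat := \dim_K FP.
Definition u_index P FP : nat := \dim_FP P.

End Defs.

(** A perfect base field K makes the ambient splitting field Galois over K,
    so subfields containing K correspond to subgroups of Gal(Om/K), Galois
    subextensions to normal subgroups, and natural irrationality gives
    [X Y : K] [X cap Y : K] = [X : K] [Y : K] whenever X/K is Galois.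
    Linear disjointness of F from the Galois closure Lt of L forces
    F cap Lt = K, hence [L F : K] = [L : K] [F : K] and likewise
    [F F_L : K] = d t(L); as F F_L is Galois inside L F, t(L F) >= d t(L).
    Conversely A = F_(LF) F is Galois with F <= A <= L F <= Lt F, so
    Lt A = Lt F and [A : K] = d [Lt cap A : K]; since Lt cap L F = L, the
    field Lt cap A is Galois inside L, whence t(L F) <= [A : K] <= d t(L).
    The statement on u is then the tower law. *)
From HB Require Import structures.
From mathcomp Require Import all_boot all_algebra all_fingroup all_field.
From mathcomp Require Import zify ring.
Set Implicit Arguments. Unset Strict Implicit. Unset Printing Implicit Defensive.
Import GRing.Theory.

Local Open Scope ring_scope.

Section PerfectField.
Variables (F0 : fieldType) (Om : splittingFieldType F0) (K : {subfield Om}).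
Hypothesis perK : perfect_subfield K.

Lemma perfect_comp_polyXn p g : p \in [pchar Om] -> g \is a polyOver K ->
  exists2 h, h \is a polyOver K & h ^+ p = g \Po 'X^p.
Proof.
move=> pchp Kg.
have rootK i : exists y, (y \in K) && (y ^+ p == g`_i).
  have [y Ky Dy] := perK pchp (polyOverP Kg i).
  by exists y; rewrite Ky Dy eqxx.
pose h := \poly_(i < size g) xchoose (rootK i).
exists h; first by apply/polyOver_poly => i _; case/andP: (xchooseP (rootK i)).
have pchP : p \in [pchar {poly Om}] := rmorph_pchar polyC pchp.
rewrite /h poly_def comp_polyE -(pFrobenius_autE pchP) rmorph_sum.
apply: eq_bigr => i _ /=; rewrite pFrobenius_autE exprZn -!exprM mulnC.
by case/andP: (xchooseP (rootK i)) => _ /eqP ->.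
Qed.

(* An inseparable minimal polynomial g(X^p) would be the p-th power of a
   polynomial over K vanishing at x, of smaller degree. *)
Lemma perfect_separable_element x : separable_element K x.
Proof.
apply/negPn/negP => /separablePn_pchar [p pchp [g Kg]].
have [h Kh <-] := perfect_comp_polyXn pchp Kg => /esym Dhp.
have p_gt1 := prime_gt1 (pcharf_prime pchp).
have hx : root h x.
  have : (h ^+ p).[x] == 0 by rewrite Dhp minPolyxx.
  by rewrite horner_exp expf_eq0 => /andP[].
have h_neq0 : h != 0.
  apply: contraTneq (monic_minPoly K x) => h0.
  by rewrite -Dhp h0 expr0n gtn_eqF ?(ltnW p_gt1) // monicE lead_coef0 eq_sym oner_eq0.
have le_minPoly_h : (size (minPoly K x) <= size h)%N.
  exact: dvdp_leq h_neq0 (minPoly_dvdp Kh hx).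
have size_hp := size_exp h p; rewrite Dhp in size_hp.
have minPoly_gt1 : (1 < size (minPoly K x))%N.
  by rewrite (root_size_gt1 (a := x)) ?monic_neq0 ?monic_minPoly ?root_minPoly.
have : ((size h).-1 * 2 <= (size (minPoly K x)).-1)%N.
  by rewrite size_hp leq_mul2l p_gt1 orbT.
move: le_minPoly_h minPoly_gt1; clear; case: (size h) => [|s] /=; lia.
Qed.

Lemma perfect_galois_fullv : galois K {:Om}.
Proof.
rewrite /galois subvf normalFieldf andbT.
by apply/separableP => y _; apply: perfect_separable_element.
Qed.

End PerfectField.

Section IndexJoin.
Local Open Scope group_scope.

Lemma indexg_join_normal (gT : finGroupType) (G H1 H2 : {group gT}) :
  H1 <| G -> H2 \subset G ->
  (#|G : H1 <*> H2| * #|G : H1 :&: H2| = #|G : H1| * #|G : H2|)%N.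
Proof.
case/andP=> sH1G nH1G sH2G.
have mulH : (#|H1 <*> H2| * #|H1 :&: H2| = #|H1| * #|H2|)%N.
  by rewrite mul_cardG norm_joinEr // (subset_trans sH2G nH1G).
have sJG : H1 <*> H2 \subset G by rewrite join_subG sH1G.
have sIG : H1 :&: H2 \subset G by rewrite subIset ?sH1G.
have H12_gt0 : (0 < #|H1| * #|H2|)%N by rewrite muln_gt0 !cardG_gt0.
apply/eqP; rewrite -(eqn_pmul2r H12_gt0); apply/eqP.
transitivity (#|H1 <*> H2| * #|G : H1 <*> H2| * (#|H1 :&: H2| * #|G : H1 :&: H2|))%N.
  by rewrite -mulH; ring.
by rewrite !Lagrange // -{1}(Lagrange sH1G) -(Lagrange sH2G); ring.
Qed.

End IndexJoin.

Section GaloisCorrespondence.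
Variables (F0 : fieldType) (Om : splittingFieldType F0).
Implicit Types K E L X Y Z : {subfield Om}.

Lemma galois_sub K E : galois K E -> (K <= E)%VS.
Proof. by case/and3P. Qed.

Lemma dimv_over_gt0 K X : (K <= X)%VS -> (0 < \dim_K X)%N.
Proof. by move=> sKX; rewrite divn_gt0 ?adim_gt0 ?dimvS. Qed.

Lemma dimv_over_tower K E X : (K <= E)%VS -> (E <= X)%VS ->
  \dim_K X = (\dim_E X * \dim_K E)%N.
Proof.
move=> sKE sEX; have dimX := dim_sup_field sEX; have dimE := dim_sup_field sKE.
set a := \dim_E X in dimX *; set b := \dim_K E in dimE *.
by rewrite dimX dimE mulnA mulnK ?adim_gt0.
Qed.

Lemma eq_dimv_over K X Y : (K <= X)%VS -> (X <= Y)%VS ->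
  (\dim_K Y <= \dim_K X)%N -> X = Y :> {vspace Om}.
Proof.
move=> sKX sXY leYX; apply/eqP; rewrite eqEdim sXY /=.
rewrite (dim_sup_field sKX) (dim_sup_field (subv_trans sKX sXY)).
by rewrite leq_mul2r leYX orbT.
Qed.

Lemma dimv_overS K X Y : (X <= Y)%VS -> (\dim_K X <= \dim_K Y)%N.
Proof. by move=> sXY; rewrite leq_div2r ?dimvS. Qed.

Lemma prodv_squeeze X Y Z : (Y <= Z)%VS -> (Z <= X * Y)%VS ->
  (X * Z)%VS = (X * Y)%VS.
Proof.
move=> sYZ sZXY; apply/eqP.
by rewrite eqEsubv prodv_sub ?field_subvMr ?prodvS.
Qed.

Local Open Scope group_scope.

Lemma gal_prodv E X Y : (X <= E)%VS -> (Y <= E)%VS ->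
  'Gal(E / (X * Y)%AS) = 'Gal(E / X) :&: 'Gal(E / Y).
Proof.
move=> sXE sYE; apply/eqP; rewrite eqEsubset subsetI.
rewrite !galS ?field_subvMr ?field_subvMl //= (galois_connection _ (prodv_sub sXE sYE)).
have fixS Z : (Z <= E)%VS -> (Z <= fixedField 'Gal(E / Z))%VS.
  by move=> sZE; rewrite -(galois_connection _ sZE).
rewrite prodv_sub //.
  exact: subv_trans (fixS X sXE) (fixedFieldS (subsetIl _ _)).
exact: subv_trans (fixS Y sYE) (fixedFieldS (subsetIr _ _)).
Qed.

Lemma gal_capv E X Y : galois X E -> galois Y E ->
  'Gal(E / (X :&: Y)%AS) = 'Gal(E / X) <*> 'Gal(E / Y).
Proof.
move=> galXE galYE; set J := ('Gal(E / X) <*> 'Gal(E / Y))%G.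
have fixJ Z : galois Z E -> 'Gal(E / Z) \subset J ->
    (fixedField J <= Z)%VS.
  by move=> galZE sZJ; rewrite -(galois_fixedField galZE) fixedFieldS.
apply/eqP; rewrite eqEsubset join_subG !galS ?capvSl ?capvSr // andbT.
have sJXY : (fixedField J <= (X :&: Y)%AS)%VS.
  by rewrite subv_cap !fixJ ?joing_subl ?joing_subr.
by rewrite (subset_trans (galS E sJXY)) ?gal_fixedField.
Qed.

Variable K : {subfield Om}.
Hypothesis galK : galois K {:Om}.

Lemma galois_fullv_over X : (K <= X)%VS -> galois X {:Om}.
Proof. by move=> sKX; apply: galoisS galK; rewrite sKX subvf. Qed.

Lemma dimv_over_indexg X : (K <= X)%VS ->
  \dim_K X = #|'Gal({:Om}%AS / K) : 'Gal({:Om}%AS / X)|.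
Proof.
move=> sKX; rewrite -{1}(galois_fixedField (galois_fullv_over sKX)).
by rewrite dim_fixed_galois ?galS.
Qed.

Lemma gal_normal X : galois K X -> 'Gal({:Om}%AS / X) <| 'Gal({:Om}%AS / K).
Proof.
case/and3P=> sKX _ nKX; apply: normalField_normal nKX => //.
by rewrite sKX subvf.
Qed.

Lemma galois_prodv X Y : galois K X -> galois K Y -> galois K (X * Y)%AS.
Proof.
move=> galX galY; have [sKX sKY] := (galois_sub galX, galois_sub galY).
rewrite -(galois_fixedField (galois_fullv_over (subv_trans sKX (field_subvMr X Y)))).
rewrite gal_prodv ?subvf //.
apply: (normal_fixedField_galois galK).
exact: normalI (gal_normal galX) (gal_normal galY).
Qed.

Lemma galois_capv X Y : galois K X -> galois K Y -> galois K (X :&: Y)%AS.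
Proof.
move=> galX galY; have [sKX sKY] := (galois_sub galX, galois_sub galY).
have sKXY : (K <= X :&: Y)%VS by rewrite subv_cap sKX sKY.
rewrite -(galois_fixedField (galois_fullv_over sKXY)).
rewrite gal_capv ?galois_fullv_over //.
apply: (normal_fixedField_galois galK).
exact: normalY (gal_normal galX) (gal_normal galY).
Qed.

Lemma dimv_prodv_capv X Y : galois K X -> (K <= Y)%VS ->
  (\dim_K (X * Y)%AS * \dim_K (X :&: Y)%AS = \dim_K X * \dim_K Y)%N.
Proof.
move=> galX sKY; have sKX := galois_sub galX.
have sKXY : (K <= X * Y)%VS := subv_trans sKX (field_subvMr X Y).
have sKcap : (K <= X :&: Y)%VS by rewrite subv_cap sKX sKY.
rewrite !dimv_over_indexg // gal_prodv ?subvf // gal_capv ?galois_fullv_over //.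
by rewrite mulnC indexg_join_normal ?gal_normal ?galS.
Qed.

Lemma dimv_prodv_disjoint X Y : galois K X -> (K <= Y)%VS -> (X :&: Y)%VS = K ->
  \dim_K (X * Y)%AS = (\dim_K X * \dim_K Y)%N.
Proof.
move=> galX sKY capXY; rewrite -dimv_prodv_capv //= capXY.
by rewrite divnn adim_gt0 muln1.
Qed.

Lemma galois_closure_exists L : (K <= L)%VS -> exists Lt, is_galois_closure K L Lt.
Proof.
move=> sKL; pose core := (gcore 'Gal({:Om}%AS / L) 'Gal({:Om}%AS / K))%G.
have nsCG : core <| 'Gal({:Om}%AS / K) by apply/gcore_normal/galS.
exists (fixedField_aspace core); split=> /=.
- rewrite -{1}(galois_fixedField (galois_fullv_over sKL)).
  exact/fixedFieldS/gcore_sub.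
- by apply: (normal_fixedField_galois galK).
move=> E sLE galE; rewrite -(galois_fixedField (galois_fullv_over (galois_sub galE))).
by rewrite fixedFieldS // sub_gcore ?(normal_norm (gal_normal galE)) ?galS.
Qed.

End GaloisCorrespondence.

Section StrongClusterMagnification.
Variables (F0 : fieldType) (Om : splittingFieldType F0) (K L F Lt : {subfield Om}).
Hypotheses (galK : galois K {:Om}) (sKL : (K <= L)%VS) (galF : galois K F).
Hypotheses (closureLt : is_galois_closure K L Lt) (disjLtF : linearly_disjoint K Lt F).
Implicit Types A Y Z FL FM : {subfield Om}.

Lemma capv_magnifier_closure : (F :&: Lt)%VS = K.
Proof.
have [sKLt sKF dimLtF] := disjLtF.
have := dimv_prodv_capv galK galF sKLt; rewrite /= prodvC.
rewrite [\dim_K (Lt * F)%VS]dimLtF (mulnC (\dim_K F)).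
rewrite -{2}(muln1 (\dim_K Lt * \dim_K F)%N).
move/eqP; rewrite eqn_pmul2l ?muln_gt0 ?dimv_over_gt0 // => /eqP dim_cap.
apply/esym/(eq_dimv_over (subvv K)); first by rewrite subv_cap sKF sKLt.
by rewrite dim_cap divnn adim_gt0.
Qed.

Lemma dimv_prodv_magnifier Y : (K <= Y)%VS -> (Y <= Lt)%VS ->
  \dim_K (Y * F)%AS = (\dim_K Y * \dim_K F)%N.
Proof.
move=> sKY sYLt; rewrite /= prodvC mulnC; apply: dimv_prodv_disjoint => //.
apply/eqP; rewrite eqEsubv -{1}capv_magnifier_closure capvS //=.
by rewrite subv_cap sKY galois_sub.
Qed.

Lemma prodv_closure_magnifier Z : (F <= Z)%VS -> (Z <= L * F)%VS ->
  (Lt * Z)%VS = (Lt * F)%VS.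
Proof.
have [sLLt _ _] := closureLt.
by move=> sFZ sZM; apply: prodv_squeeze sFZ (subv_trans sZM (prodvSl F sLLt)).
Qed.

Lemma capv_closure_magnification : (Lt :&: (L * F))%VS = L.
Proof.
have [sLLt galLt _] := closureLt; have [sKLt sKF dimLtF] := disjLtF.
have := dimv_prodv_capv galK galLt (subv_trans sKL (field_subvMr L F)).
rewrite /= prodv_closure_magnifier ?field_subvMl //.
rewrite [\dim_K (Lt * F)%VS]dimLtF dimv_prodv_magnifier // (mulnC (\dim_K L)) mulnA.
move/eqP; rewrite eqn_pmul2l ?muln_gt0 ?dimv_over_gt0 // => /eqP dim_cap.
apply/esym/(eq_dimv_over sKL); first by rewrite subv_cap sLLt field_subvMr.
by rewrite dim_cap.
Qed.

Lemma dimv_galois_magnification A : galois K A -> (F <= A)%VS -> (A <= L * F)%VS ->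
  \dim_K A = (\dim_K F * \dim_K (Lt :&: A)%AS)%N.
Proof.
have [_ galLt _] := closureLt; have [sKLt _ dimLtF] := disjLtF.
move=> galA sFA sAM; have := dimv_prodv_capv galK galLt (galois_sub galA).
rewrite /= prodv_closure_magnifier // [\dim_K (Lt * F)%VS]dimLtF -mulnA.
by move/eqP; rewrite eqn_pmul2l ?dimv_over_gt0 // => /eqP.
Qed.

Lemma dimv_max_galois_magnification FL FM :
  is_max_galois_sub K L FL -> is_max_galois_sub K (L * F)%AS FM ->
  \dim_K FM = (\dim_K F * \dim_K FL)%N.
Proof.
have [sLLt galLt _] := closureLt.
case=> sFLL galFL maxFL [sFMM galFM maxFM]; apply/eqP; rewrite eqn_leq.
apply/andP; split.
- set A := (FM * F)%AS; have galA : galois K A := galois_prodv galK galFM galF.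
  have sAM : (A <= L * F)%VS by rewrite prodv_sub ?field_subvMl.
  have galLtA : galois K (Lt :&: A)%AS by apply: (galois_capv galK).
  have sLtAL : (Lt :&: A <= L)%VS by rewrite -capv_closure_magnification capvS.
  apply: leq_trans (dimv_overS K (field_subvMr FM F)) _.
  by rewrite dimv_galois_magnification ?field_subvMl // leq_mul2l maxFL ?orbT.
- rewrite mulnC -dimv_prodv_magnifier ?(galois_sub galFL) ?(subv_trans sFLL sLLt) //.
  by rewrite maxFM ?galois_prodv ?(prodvSl F sFLL).
Qed.

End StrongClusterMagnification.

Theorem theorem9p4 (F0 : fieldType) (Om : splittingFieldType F0)
  (K L M F FL FM : {subfield Om}) :
  perfect_subfield K ->
  strong_cluster_magnification K L M F ->
  is_max_galois_sub K L FL ->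
  is_max_galois_sub K M FM ->
  t_index K FM = (\dim_K F * t_index K FL)%N /\ u_index M FM = u_index L FL.
Proof.
move=> perK [[sKL _] _ galF disj <-] maxFL maxFM.
have galK := perfect_galois_fullv perK.
have [Lt closureLt] := galois_closure_exists galK sKL.
have disjLtF := disj Lt closureLt.
have dimFM := dimv_max_galois_magnification galK sKL galF closureLt disjLtF maxFL maxFM.
split; first exact: dimFM.
have [[sFLL galFL _] [sFMM galFM _]] := (maxFL, maxFM).
have [sLLt _ _] := closureLt.
apply/eqP; rewrite /u_index -(eqn_pmul2r (dimv_over_gt0 (galois_sub galFM))).
rewrite -(dimv_over_tower (galois_sub galFM) sFMM) dimFM.
rewrite (dimv_prodv_magnifier galK galF disjLtF sKL sLLt).
by rewrite (dimv_over_tower (galois_sub galFL) sFLL) mulnAC mulnA.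
Qed.
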